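(* Let $X$ be a feasible solution of the General-Cost Convex Program and let $\alpha_j$ be the first arrival times produced by Continuous-Time Poisson Rounding from $X$. For any box $i\in[n]$, any time $\tau\ge 0$, and any thresholds $\theta_j\ge 0$ for $j\ne i$, $$\mathbf{E}\Big[\sum_{j\ne i:\,\alpha_j<\tau}c_j\ \Big|\ \forall j\ne i,\ \alpha_j>\theta_j\Big]\le\tau.$$
   Context: Boxes $[n]$ with costs $c_i>0$. Write $x_+=\max\{x,0\}$. A feasible solution of the General-Cost Convex Program is a family of non-decreasing functions $X_i:[0,\infty)\to[0,1]$, $i\in[n]$, with $\sum_{i\in[n]}\big(X_i(t)-X_i((t-c_i)_+)\big)\le 1$ for all $t\ge 0$. Continuous-Time Poisson Rounding: let $\bar x_i(t)=\frac1t\int_0^t\big(X_i(t')-X_i((t'-c_i)_+)\big)\,dt'$. Independently for each box $i$, arrivals of box $i$ form a non-homogeneous Poisson process in time $\tau\ge 0$ with rate $\frac1{c_i}\bar x_i(\tau/2)$; $\alpha_i$ is the first arrival time of box $i$ ($\infty$ if none). *)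

From HB Require Import structures.
From mathcomp Require Import all_boot all_order all_algebra.
From mathcomp Require Import all_classical all_reals all_analysis.
From mathcomp Require Import measurable_realfun.
Set Implicit Arguments. Unset Strict Implicit. Unset Printing Implicit Defensive.
Import Order.TTheory GRing.Theory Num.Theory.
Local Open Scope classical_set_scope.
Local Open Scope ring_scope.

Section GeneralCost.
Variable R : realType.
Variable n : nat.

(* Feasibility for the General-Cost Convex Program.  Functions are given
   on all of R but only their values on [0, oo) matter. *)
Definition gccp_feasible (c : 'I_n -> R) (X : 'I_n -> R -> R) : Prop :=
  (forall i s t, 0 <= s -> s <= t -> X i s <= X i t) /\
  (forall i t, 0 <= t -> 0 <= X i t <= 1) /\
  (forall t, 0 <= t ->
     \sum_(i < n) (X i t - X i (Num.max (t - c i) 0)) <= 1).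

Definition xbar (c : 'I_n -> R) (X : 'I_n -> R -> R) (i : 'I_n) (t : R) : R :=
  t^-1 * Rintegral lebesgue_measure `[0, t]
           (fun t' => X i t' - X i (Num.max (t' - c i) 0)).

Definition poisson_rate (c : 'I_n -> R) (X : 'I_n -> R -> R) (i : 'I_n) (tau : R) : R :=
  (c i)^-1 * xbar c X i (tau / 2).

Definition cum_rate (c : 'I_n -> R) (X : 'I_n -> R -> R) (i : 'I_n) (t : R) : R :=
  Rintegral lebesgue_measure `[0, t] (poisson_rate c X i).
End GeneralCost.

(* Continuous-Time Poisson Rounding: alpha i is the first arrival time
   ( +oo if none ) of an independent non-homogeneous Poisson process with
   the rate above. *)
Definition poisson_rounding (R : realType) (n : nat) (d : measure_display)
  (T : measurableType d) (P : probability T R)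
  (c : 'I_n -> R) (X : 'I_n -> R -> R) (alpha : 'I_n -> T -> \bar R) : Prop :=
  (forall i, measurable_fun setT (alpha i)) /\
  (forall i t, 0 <= t ->
     P [set w | (t%:E < alpha i w)%E] = (expR (- cum_rate c X i t))%:E) /\
  (forall B : 'I_n -> set (\bar R), (forall j, measurable (B j)) ->
     P (\bigcap_(j in [set: 'I_n]) (alpha j @^-1` B j))
       = (\prod_(j < n) P (alpha j @^-1` B j))%E).

Definition cond_exp_event (R : realType) (d : measure_display)
  (T : measurableType d) (P : probability T R) (A : set T) (Y : T -> \bar R)
  : \bar R :=
  ((\int[P]_(w in A) Y w) * ((fine (P A))^-1)%:E)%E.

From HB Require Import structures.
From mathcomp Require Import all_boot all_order all_algebra.
From mathcomp Require Import all_classical all_reals all_analysis.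
From mathcomp Require Import measurable_realfun.
From mathcomp Require Import lra.
Import Order.TTheory GRing.Theory Num.Theory.
Local Open Scope classical_set_scope.
Local Open Scope ring_scope.

(* Write g_j(t) = X_j(t) - X_j((t - c_j)_+).  Feasibility says sum_j g_j <= 1,
   hence sum_j xbar_j <= 1, and since c_j Lambda_j(tau) = int_0^tau xbar_j(s/2) ds
   we get sum_j c_j Lambda_j(tau) <= tau.  By independence, the conditioning event
   A = {alpha_k > theta_k for all k <> i} constrains alpha_j only through
   alpha_j > theta_j, and for a first arrival time
   P(theta < alpha < tau) <= P(alpha > theta) Lambda(tau), because
   e^-a - e^-b <= e^-a b for a >= 0.  So P(alpha_j < tau | A) <= Lambda_j(tau), and
   linearity of expectation bounds the conditional expected cost by
   sum_j c_j Lambda_j(tau) <= tau. *)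

Section LebesgueInterval.
Context {R : realType}.
Local Notation mu := (@lebesgue_measure R).

Lemma lebesgue_measure_itv_cc_lty (a b : R) : (mu `[a, b] < +oo)%E.
Proof.
rewrite lebesgue_measure_itv /=.
by case: ifP => _; rewrite ?ltry // -EFinD ltry.
Qed.

Lemma lebesgue_measure_itv0 (t : R) : 0 <= t -> mu `[0%R, t] = t%:E.
Proof.
move=> t0; rewrite lebesgue_measure_itv /= lte_fin.
have [tgt0|] := ltP 0 t; first by rewrite -EFinD subr0.
by move=> t_le0; have -> : t = 0 by apply/le_anti/andP.
Qed.

Lemma bounded_integrable_itv (f : R -> R) (a b M : R) :
  measurable_fun `[a, b] f -> (forall x, a <= x <= b -> `|f x| <= M) ->
  mu.-integrable `[a, b] (EFin \o f).
Proof.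
move=> mf fM; apply: measurable_bounded_integrable => //.
  exact: lebesgue_measure_itv_cc_lty.
exists M; split; first exact: num_real.
move=> y My x; rewrite /= in_itv /= => /fM /le_trans; apply; exact: ltW.
Qed.

Lemma nondecreasing_on_measurable (f : R -> R) (t : R) :
  (forall s u, 0 <= s -> s <= u -> f s <= f u) -> measurable_fun `[0, t] f.
Proof.
move=> f_nd; pose g x := f (Num.max x 0).
have mg : measurable_fun `[0, t] g.
  apply: nondecreasing_measurable => // x y xy.
  apply: f_nd; first by rewrite le_max lexx orbT.
  by rewrite ge_max !le_max xy lexx !orbT.
apply: eq_measurable_fun mg => x; rewrite inE /= in_itv /= => /andP[x0 _].
by rewrite /g (max_idPl x0).
Qed.

Lemma Rintegral_sum (I : Type) (D : set R) (s : seq I) (F : I -> R -> R) :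
  measurable D -> (forall k, mu.-integrable D (EFin \o F k)) ->
  \int[mu]_(x in D) (\sum_(k <- s) F k x) = \sum_(k <- s) \int[mu]_(x in D) F k x.
Proof.
move=> mD intF; rewrite /Rintegral.
under eq_integral do rewrite -sumEFin.
rewrite integral_sum // -sum_fine // => k _.
by move: (intF k) => /integrable_fin_num; apply.
Qed.

Lemma integrable_sum_Rfun (I : Type) (D : set R) (s : seq I) (F : I -> R -> R) :
  measurable D -> (forall k, mu.-integrable D (EFin \o F k)) ->
  mu.-integrable D (EFin \o (fun x => \sum_(k <- s) F k x)).
Proof.
move=> mD intF.
have : mu.-integrable D (fun x => \sum_(k <- s) (EFin \o F k) x).
  by apply: integrable_sum => // k _; exact: intF.
by apply: eq_integrable => // x _ /=; rewrite sumEFin.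
Qed.

Lemma sum_Rintegral_itv0_le (I : Type) (s : seq I) (F : I -> R -> R) (t : R) :
  0 <= t -> (forall k, mu.-integrable `[0, t] (EFin \o F k)) ->
  (forall x, 0 <= x <= t -> \sum_(k <- s) F k x <= 1) ->
  \sum_(k <- s) \int[mu]_(x in `[0, t]) F k x <= t.
Proof.
move=> t0 intF F1; rewrite -Rintegral_sum //.
apply: (@le_trans _ _ (\int[mu]_(x in `[0, t]) cst 1 x)).
  apply: le_Rintegral => //; first exact: integrable_sum_Rfun.
  apply: (@bounded_integrable_itv _ _ _ 1); first exact: measurable_cst.
  by move=> x _; rewrite normr1.
rewrite Rintegral_cst // mul1r (_ : fine _ = t) //.
exact (congr1 fine (lebesgue_measure_itv0 t t0)).
Qed.

Lemma le_Rintegral_itv0 (f : R -> R) (s t : R) :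
  (forall x, 0 <= x -> 0 <= f x) -> mu.-integrable `[0, t] (EFin \o f) ->
  0 <= s <= t ->
  \int[mu]_(x in `[0, s]) f x <= \int[mu]_(x in `[0, t]) f x.
Proof.
move=> f0 intf /andP[s0 st].
have sub : `[0, s] `<=` `[0, t] by apply: subset_itvl; rewrite bnd_simp.
apply: fine_le.
- by apply: integrable_fin_num => //; exact: integrableS intf.
- exact: integrable_fin_num.
apply: ge0_subset_integral => //; first exact: measurable_int intf.
by move=> x; rewrite /= in_itv /= => /andP[x0 _]; rewrite lee_fin f0.
Qed.

End LebesgueInterval.

Lemma measurable_inv_itv0 {R : realType} (t : R) :
  measurable_fun `[0, t] (fun s : R => s^-1).
Proof.
have mpow : measurable_fun `[0, t] (fun s : R => s `^ (-1)).
  by apply: (measurable_funS measurableT) => //; exact: measurable_powR.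
apply: eq_measurable_fun mpow => x; rewrite inE /= in_itv /= => /andP[x0 _].
exact: powR_inv1.
Qed.

Section GeneralCostRates.
Context {R : realType} {n : nat} {c : 'I_n -> R} {X : 'I_n -> R -> R}.
Hypotheses (c_gt0 : forall j, 0 < c j) (feasX : gccp_feasible c X).
Local Notation mu := (@lebesgue_measure R).

Definition gccp_gap (j : 'I_n) (t : R) := X j t - X j (Num.max (t - c j) 0).

Lemma gccp_gap_itv (j : 'I_n) (t : R) : 0 <= t -> 0 <= gccp_gap j t <= 1.
Proof.
move=> t0; case: feasX => X_nd [X01 _].
have m0 : 0 <= Num.max (t - c j) 0 by rewrite le_max lexx orbT.
have mt : Num.max (t - c j) 0 <= t by rewrite ge_max t0 andbT gerBl ltW.
have /andP[_ Xt1] := X01 j t t0; have /andP[Xm0 _] := X01 j _ m0.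
rewrite /gccp_gap subr_ge0 X_nd //= lerBlDr.
by apply: le_trans Xt1 _; rewrite lerDl.
Qed.

Lemma measurable_gccp_gap (j : 'I_n) (t : R) : measurable_fun `[0, t] (gccp_gap j).
Proof.
case: feasX => X_nd _.
apply: measurable_funB; first exact: nondecreasing_on_measurable (X_nd j).
apply: nondecreasing_on_measurable => s u s0 su.
apply: X_nd; first by rewrite le_max lexx orbT.
by rewrite ge_max !le_max lerD2r su lexx !orbT.
Qed.

Lemma integrable_gccp_gap (j : 'I_n) (t : R) : mu.-integrable `[0, t] (EFin \o gccp_gap j).
Proof.
apply: (@bounded_integrable_itv _ _ _ _ 1); first exact: measurable_gccp_gap.
move=> x /andP[x0 _]; have /andP[g0 g1] := gccp_gap_itv j _ x0.
by rewrite ger0_norm.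
Qed.

Lemma xbarE (j : 'I_n) (t : R) : xbar c X j t = t^-1 * \int[mu]_(x in `[0, t]) gccp_gap j x.
Proof. by []. Qed.

Lemma xbar_ge0 (j : 'I_n) (t : R) : 0 <= t -> 0 <= xbar c X j t.
Proof.
move=> t0; rewrite xbarE mulr_ge0 ?invr_ge0 // Rintegral_ge0 // => x.
by rewrite /= in_itv /= => /andP[x0 _]; case/andP: (gccp_gap_itv j _ x0).
Qed.

Lemma sum_xbar_le1 (t : R) : 0 <= t -> \sum_j xbar c X j t <= 1.
Proof.
move=> t0; under eq_bigr do rewrite xbarE; rewrite -mulr_sumr.
have [->|t_neq0] := eqVneq t 0; first by rewrite invr0 mul0r.
rewrite -(mulVf t_neq0) ler_wpM2l ?invr_ge0 //.
apply: sum_Rintegral_itv0_le => // [j|x /andP[x0 _]].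
  exact: integrable_gccp_gap.
by case: feasX => _ [_ /(_ x x0)].
Qed.

Lemma xbar_le1 (j : 'I_n) (t : R) : 0 <= t -> xbar c X j t <= 1.
Proof.
move=> t0; apply: le_trans (sum_xbar_le1 _ t0).
by rewrite (bigD1 j) //= lerDl sumr_ge0 // => k _; exact: xbar_ge0.
Qed.

Lemma measurable_xbar_half (j : 'I_n) (t : R) :
  measurable_fun `[0, t] (fun s => xbar c X j (s / 2)).
Proof.
pose G s := \int[mu]_(x in `[0, s]) gccp_gap j x.
have mG : measurable_fun `[0, t] (fun s => G (s / 2)).
  apply: nondecreasing_on_measurable => s u s0 su.
  apply: le_Rintegral_itv0; rewrite ?divr_ge0 ?ler_pM2r //=.
  - by move=> x x0; case/andP: (gccp_gap_itv j _ x0).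
  - exact: integrable_gccp_gap.
have mf : measurable_fun `[0, t] (fun s => s^-1 * 2 * G (s / 2)).
  apply: measurable_funM => //; apply: measurable_funM => //.
  exact: measurable_inv_itv0.
by apply: eq_measurable_fun mf => s _; rewrite xbarE invfM invrK.
Qed.

Lemma integrable_xbar_half (j : 'I_n) (t : R) :
  mu.-integrable `[0, t] (EFin \o (fun s => xbar c X j (s / 2))).
Proof.
apply: (@bounded_integrable_itv _ _ _ _ 1); first exact: measurable_xbar_half.
move=> s /andP[s0 _]; have s20 : 0 <= s / 2 by rewrite divr_ge0.
by rewrite ger0_norm ?xbar_ge0 ?xbar_le1.
Qed.

Lemma mul_cum_rate (j : 'I_n) (t : R) :
  c j * cum_rate c X j t = \int[mu]_(s in `[0, t]) xbar c X j (s / 2).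
Proof.
rewrite /cum_rate /poisson_rate RintegralZl //; last exact: integrable_xbar_half.
by rewrite mulrA mulfV ?mul1r // gt_eqF.
Qed.

Lemma cum_rate_ge0 (j : 'I_n) (t : R) : 0 <= cum_rate c X j t.
Proof.
apply: Rintegral_ge0 => s; rewrite /= in_itv /= => /andP[s0 _].
by rewrite /poisson_rate mulr_ge0 ?invr_ge0 ?xbar_ge0 ?divr_ge0 ?(ltW (c_gt0 j)).
Qed.

Lemma sum_mul_cum_rate_le (t : R) : 0 <= t -> \sum_j c j * cum_rate c X j t <= t.
Proof.
move=> t0; under eq_bigr do rewrite mul_cum_rate.
apply: sum_Rintegral_itv0_le => // [j|s /andP[s0 _]].
  exact: integrable_xbar_half.
by apply: sum_xbar_le1; rewrite divr_ge0.
Qed.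

End GeneralCostRates.

Lemma expRN_subr_le {R : realType} (a b : R) : 0 <= a ->
  expR (- a) - expR (- b) <= expR (- a) * b.
Proof.
move=> a0; have ea0 := expR_gt0 (- a).
rewrite -[in expR (- b)](addKr a (- b)) expRD -[X in X - _]mulr1 -mulrBr.
rewrite ler_pM2l //; have := expR_ge1Dx (a - b); lra.
Qed.

Lemma measurable_preimage {d d'} {T : measurableType d} {U : measurableType d'}
    {f : T -> U} {B : set U} :
  measurable_fun setT f -> measurable B -> measurable (f @^-1` B).
Proof. by move=> mf mB; rewrite -[f @^-1` B]setTI; exact: mf. Qed.

Section FirstArrival.
Context {R : realType} {d : measure_display} {T : measurableType d}.
Context {P : probability T R} {Y : T -> \bar R} {L : R -> R}.
Hypotheses (mY : measurable_fun setT Y)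
  (survY : forall t, 0 <= t -> P [set w | (t%:E < Y w)%E] = (expR (- L t))%:E).

Let mYitv (i : interval (\bar R)) : measurable (Y @^-1` [set` i]).
Proof. exact/(measurable_preimage mY)/emeasurable_itv. Qed.

Lemma first_arrival_rate_ge0 t : 0 <= t -> 0 <= L t.
Proof.
move=> t0; have := probability_le1 P (mYitv `]t%:E, +oo[).
by rewrite preimage_itvoy survY // lee_fin expR_le1 oppr_le0.
Qed.

Local Open Scope ereal_scope.

Lemma first_arrival_itv_le (th t : R) : (0 <= th)%R -> (0 <= t)%R ->
  P (Y @^-1` `]th%:E, t%:E[) <= P (Y @^-1` `]th%:E, +oo[) * (L t)%:E.
Proof.
move=> th0 t0; have [t_le_th|th_lt_t] := leP t th.
  rewrite (_ : _ @^-1` _ = set0) ?measure0 ?mule_ge0 ?lee_fin ?first_arrival_rate_ge0 //.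
  apply/seteqP; split => w //=; rewrite in_itv /= => /andP[thY Yt].
  by have := lt_trans thY Yt; rewrite lte_fin ltNge t_le_th.
set C := Y @^-1` `]th%:E, t%:E[.
have PC_le : P C + P (Y @^-1` `]t%:E, +oo[) <= P (Y @^-1` `]th%:E, +oo[).
  rewrite -measureU //; try exact: mYitv.
  - apply: le_measure; rewrite ?inE; try exact: mYitv.
      by apply: measurableU; exact: mYitv.
    move=> w; rewrite /C /= !in_itv /= !andbT => -[/andP[thY _] // | tY].
    by rewrite (lt_trans _ tY) // lte_fin.
  - apply/seteqP; split => w //=; rewrite !in_itv /= => -[/andP[_ Yt] /andP[tY _]].
    by have := lt_trans Yt tY; rewrite ltxx.
have PCE : P C = (fine (P C))%:E by rewrite fineK // fin_num_measure //; exact: mYitv.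
rewrite PCE preimage_itvoy survY // -EFinM lee_fin /=.
move: PC_le; rewrite !preimage_itvoy !survY // PCE -EFinD lee_fin => PC_le.
apply: le_trans (@expRN_subr_le _ _ (L t) (first_arrival_rate_ge0 _ th0)).
by rewrite lerBrDr.
Qed.

End FirstArrival.

Section IndicatorIntegrals.
Context {d : measure_display} {T : measurableType d} {R : realType}.
Local Open Scope ereal_scope.

Lemma integral_sum_indic (mu : {measure set T -> \bar R}) (I : Type) (s : seq I)
    (p : pred I) (w : I -> R) (E : I -> set T) (A : set T) :
  measurable A -> (forall k, measurable (E k)) -> (forall k, (0 <= w k)%R) ->
  \int[mu]_(x in A) (\sum_(k <- s | p k) (w k * \1_(E k) x)%:E) =
  \sum_(k <- s | p k) (w k)%:E * mu (E k `&` A).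
Proof.
move=> mA mE w0; under eq_integral do rewrite -big_filter.
rewrite -big_filter ge0_integral_sum //.
- apply: eq_bigr => k _; under eq_integral do rewrite EFinM.
  by rewrite ge0_integralZl_EFin // ?integral_indic //; exact/measurable_EFinP.
- move=> k; apply/measurable_EFinP.
  by apply: measurable_funM => //; exact: measurable_indic.
- by move=> k x _; rewrite lee_fin mulr_ge0 // indicE ler0n.
Qed.

Lemma cond_exp_event_le (P : probability T R) (A : set T) (Y : T -> \bar R) (t : R) :
  (0 <= t)%R -> \int[P]_(x in A) Y x <= (fine (P A) * t)%:E ->
  cond_exp_event P A Y <= t%:E.
Proof.
move=> t0 intY; rewrite /cond_exp_event.
have pA0 : (0 <= fine (P A))%R by rewrite fine_ge0.
apply: le_trans (lee_wpmul2r _ intY) _; first by rewrite lee_fin invr_ge0.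
rewrite -EFinM lee_fin; have [->|pA_neq0] := eqVneq (fine (P A)) 0%R.
  by rewrite invr0 mulr0.
by rewrite mulrAC mulfV ?mul1r.
Qed.

End IndicatorIntegrals.

Definition beyond_thresholds {R : realType} {T : Type} {n : nat}
    (alpha : 'I_n -> T -> \bar R) (i : 'I_n) (theta : 'I_n -> R) : set T :=
  [set w | forall j, j != i -> ((theta j)%:E < alpha j w)%E].

Definition threshold_set {R : realType} {n : nat} (i : 'I_n) (theta : 'I_n -> R)
    (k : 'I_n) : set (\bar R) :=
  if k == i then setT else `](theta k)%:E, +oo[%classic.

Lemma measurable_threshold_set {R : realType} {n : nat} (i : 'I_n) (theta : 'I_n -> R)
    (k : 'I_n) : measurable (threshold_set i theta k).
Proof.
by rewrite /threshold_set; case: ifP => _; [exact: measurableT|exact: emeasurable_itv].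
Qed.

Section IndependentArrivals.
Context {R : realType} {d : measure_display} {T : measurableType d} {n : nat}.
Context {P : probability T R} {alpha : 'I_n -> T -> \bar R} {L : 'I_n -> R -> R}.
Hypotheses (malpha : forall j, measurable_fun setT (alpha j))
  (surv : forall j t, (0 <= t)%R ->
     P [set w | (t%:E < alpha j w)%E] = (expR (- L j t))%:E)
  (indep : forall B : 'I_n -> set (\bar R), (forall j, measurable (B j)) ->
     P (\bigcap_(j in [set: 'I_n]) (alpha j @^-1` B j))
       = (\prod_(j < n) P (alpha j @^-1` B j))%E).
Local Open Scope ereal_scope.

Lemma prob_bigcap_preimage_le (B B' : 'I_n -> set (\bar R)) (j : 'I_n) (r : \bar R) :
  (forall k, measurable (B k)) -> (forall k, measurable (B' k)) ->
  (forall k, k != j -> B' k = B k) ->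
  P (alpha j @^-1` B' j) <= P (alpha j @^-1` B j) * r ->
  P (\bigcap_(k in [set: 'I_n]) (alpha k @^-1` B' k)) <=
  P (\bigcap_(k in [set: 'I_n]) (alpha k @^-1` B k)) * r.
Proof.
move=> mB mB' B'E PB'j; rewrite !indep // (bigD1 j) //= [X in _ <= X * _](bigD1 j) //=.
rewrite (eq_bigr _ (fun k kj => congr1 (fun S => P (alpha k @^-1` S)) (B'E k kj))).
by rewrite muleAC lee_wpmul2r // prode_ge0.
Qed.

Lemma beyond_thresholdsE (i : 'I_n) (theta : 'I_n -> R) :
  beyond_thresholds alpha i theta = \bigcap_(k in [set: 'I_n]) (alpha k @^-1` threshold_set i theta k).
Proof.
apply/seteqP; split => w /= hw k.
- by rewrite /threshold_set; case: eqP => [//|/eqP ki _] /=; rewrite in_itv /= andbT hw.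
- by move=> ki; have := hw k I; rewrite /threshold_set (negbTE ki) /= in_itv /= andbT.
Qed.

Lemma measurable_beyond_thresholds (i : 'I_n) (theta : 'I_n -> R) :
  measurable (beyond_thresholds alpha i theta).
Proof.
rewrite beyond_thresholdsE; apply: fin_bigcap_measurable => // k _.
exact/(measurable_preimage (malpha k))/measurable_threshold_set.
Qed.

Lemma prob_arrival_beyond_le (i j : 'I_n) (theta : 'I_n -> R) (tau : R) :
  j != i -> (0 <= theta j)%R -> (0 <= tau)%R ->
  P (alpha j @^-1` [set x | x < tau%:E] `&` beyond_thresholds alpha i theta) <=
  P (beyond_thresholds alpha i theta) * (L j tau)%:E.
Proof.
move=> ji theta0 tau0.
pose B' k := if k == j then `](theta j)%:E, tau%:E[%classic else threshold_set i theta k.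
have -> : alpha j @^-1` [set x | x < tau%:E] `&` beyond_thresholds alpha i theta =
    \bigcap_(k in [set: 'I_n]) (alpha k @^-1` B' k).
  rewrite beyond_thresholdsE /B'; apply/seteqP; split => w /=.
  - move=> [Yt hw] k _; case: eqP => [->|_]; last exact: hw.
    by have := hw j I; rewrite /threshold_set (negbTE ji) /= !in_itv /= Yt andbT.
  - move=> hw; split => [|k _].
      by have := hw j I; rewrite eqxx /= in_itv /= => /andP[].
    have := hw k I; case: eqP => [->|//]; rewrite /= in_itv /= => /andP[thY _].
    by rewrite /threshold_set (negbTE ji) /= in_itv /= thY.
rewrite beyond_thresholdsE; apply: (prob_bigcap_preimage_le _ _ j).
- exact: measurable_threshold_set.
- move=> k; rewrite /B'; case: ifP => _; first exact: emeasurable_itv.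
  exact: measurable_threshold_set.
- by move=> k /negbTE; rewrite /B' => ->.
- rewrite /B' eqxx /threshold_set (negbTE ji).
  exact: (first_arrival_itv_le (malpha j) (surv j)).
Qed.

Lemma cond_exp_beyond_le (i : 'I_n) (theta : 'I_n -> R) (tau : R) (w : 'I_n -> R) :
  (forall j, (0 <= w j)%R) -> (forall j, j != i -> (0 <= theta j)%R) -> (0 <= tau)%R ->
  (\sum_(j | j != i) w j * L j tau <= tau)%R ->
  cond_exp_event P (beyond_thresholds alpha i theta)
    (fun x => (\sum_(j < n | (j != i) && (alpha j x < tau%:E)%E) w j)%:E) <= tau%:E.
Proof.
move=> w0 theta0 tau0 sum_le; set A := beyond_thresholds alpha i theta.
have mA : measurable A := measurable_beyond_thresholds i theta.
pose E j := alpha j @^-1` [set x | x < tau%:E].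
have mE j : measurable (E j).
  by apply: (measurable_preimage (malpha j)); rewrite -set_itvNyo; exact: emeasurable_itv.
have sumE x : (\sum_(j < n | (j != i) && (alpha j x < tau%:E)%E) w j)%:E =
    \sum_(j < n | j != i) (w j * \1_(E j) x)%:E.
  rewrite big_mkcondr sumEFin; congr EFin; apply: eq_bigr => j _.
  rewrite indicE; case: ifPn => [Ex|/negP Ex].
  - by rewrite mem_set ?mulr1.
  - by rewrite memNset ?mulr0.
apply: cond_exp_event_le => //; under eq_integral do rewrite sumE.
rewrite integral_sum_indic //.
apply: (@le_trans _ _ (\sum_(j | j != i) (w j)%:E * (P A * (L j tau)%:E))).
  apply: lee_sum => j ji; apply: lee_wpmul2l; first by rewrite lee_fin.
  exact: prob_arrival_beyond_le ji (theta0 j ji) tau0.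
have PAE : P A = (fine (P A))%:E by rewrite fineK // fin_num_measure.
rewrite PAE; under eq_bigr do rewrite -!EFinM; rewrite sumEFin lee_fin.
under eq_bigr do rewrite mulrCA; rewrite -mulr_sumr ler_wpM2l // fine_ge0 //.
Qed.

End IndependentArrivals.

Theorem lemma4p4 (R : realType) (n : nat) (d : measure_display)
  (T : measurableType d) (P : probability T R)
  (c : 'I_n -> R) (X : 'I_n -> R -> R) (alpha : 'I_n -> T -> \bar R)
  (hc : forall i, 0 < c i)
  (hX : gccp_feasible c X)
  (halpha : poisson_rounding P c X alpha)
  (i : 'I_n) (tau : R) (htau : 0 <= tau)
  (theta : 'I_n -> R) (htheta : forall j, j != i -> 0 <= theta j) :
  (cond_exp_event P
     [set w | forall j, j != i -> ((theta j)%:E < alpha j w)%E]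
     (fun w => (\sum_(j < n | (j != i) && (alpha j w < tau%:E)%E) c j)%:E)
   <= tau%:E)%E.
Proof.
have [malpha [surv indep]] := halpha.
apply: (cond_exp_beyond_le malpha surv indep) => // [j|]; first exact: ltW.
apply: le_trans (sum_mul_cum_rate_le hc hX _ htau).
by rewrite [leRHS](bigD1 i) //= lerDr mulr_ge0 ?cum_rate_ge0 ?ltW.
Qed.
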